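(* Let $\nu\in(0,1)$, $r=\min\{\nu,1-\nu\}$, $R=\max\{\nu,1-\nu\}$, and put $D(t):=L(t,1)-L(t^\nu,1)$. If $t>1$, then \begin{align*} &\frac{r}{\nu}\frac{(\sqrt t-1)^2}{\log t}\le D(t)\le \frac{R}{\nu}\frac{(\sqrt t-1)^2}{\log t},\\ &\frac{1-\nu}{2}\frac{(t-1)^2}{\max\{t,1\}\log t}\le D(t)\le \frac{1-\nu}{2}\frac{(t-1)^2}{\min\{t,1\}\log t},\\ &\frac{1-\nu}{2}\min\{t,1\}\log t\le D(t)\le \frac{1-\nu}{2}\max\{t,1\}\log t,\\ &\frac{1-\nu}{\nu}\min\left\{\frac{\nu}{1-\nu},\frac{1-\nu}{\nu}\right\}\big(L(t,1)-L(t^{1-\nu},1)\big)\le D(t)\le \frac{1-\nu}{\nu}\max\left\{\frac{\nu}{1-\nu},\frac{1-\nu}{\nu}\right\}\big(L(t,1)-L(t^{1-\nu},1)\big). \end{align*} If $0<t<1$, all these inequalities hold with the inequality signs reversed.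
   Context: For $x,y>0$, $x\ne y$, the logarithmic mean is $L(x,y):=\dfrac{x-y}{\log x-\log y}$. *)

From Stdlib Require Import Reals.
Open Scope R_scope.

Definition logmean (x y : R) : R := (x - y) / (ln x - ln y).

Definition Dnu (nu t : R) : R := logmean t 1 - logmean (Rpower t nu) 1.

From Stdlib Require Import Reals Lra Psatz.
From Coquelicot Require Import Coquelicot.
Open Scope R_scope.

(* Put t = e^s.  Then ln t * D(t) = e^s - 1 - (e^(nu s) - 1) / nu =: Dnum nu s, so each
   pair of bounds on D(t) is a pair of bounds on Dnum nu s divided by s; dividing by
   s < 0 is what reverses the inequalities when t < 1.

   The first and last pairs compare Dnum at two parameters.  For fixed s the map
   nu |-> e^(nu s) is convex, so its chord slopes (e^(nu s) - 1) / nu from 0 and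
   (e^s - e^(nu s)) / (1 - nu) to 1 both increase with nu.  Hence Dnum nu s decreases
   in nu while nu / (1 - nu) * Dnum nu s increases, and Dnum (1/2) s = (sqrt t - 1)^2.

   The middle pairs compare functions vanishing at s = 0 through their derivatives:
   by convexity of exp, the derivative e^s - e^(nu s) of Dnum nu lies between
   (1 - nu) (e^s - 1) and (1 - nu) s e^s. *)

Lemma nondecreasing_of_derive (h h' : R -> R) :
  (forall x, is_derive h x (h' x)) -> (forall x, 0 <= h' x) ->
  forall a b, a <= b -> h a <= h b.
Proof.
  intros Hd Hpos a b [Hab | <-]; [| lra].
  destruct (MVT_cor2 h h' a b Hab) as (c & Hc & _).
  { intros c _. apply is_derive_Reals, Hd. }
  specialize (Hpos c). nra.
Qed.

Lemma le_of_derive_le (f g f' g' : R -> R) :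
  (forall x, is_derive f x (f' x)) -> (forall x, is_derive g x (g' x)) ->
  (forall x, f' x <= g' x) -> f 0 = g 0 ->
  forall x, (0 <= x -> f x <= g x) /\ (x <= 0 -> g x <= f x).
Proof.
  intros Hf Hg Hle H0 x.
  assert (mono := nondecreasing_of_derive (fun y => g y - f y) (fun y => g' y - f' y)).
  assert (Hd : forall y, is_derive (fun y => g y - f y) y (g' y - f' y))
    by (intro y; apply (is_derive_minus g f); auto).
  assert (Hs : forall y, 0 <= g' y - f' y) by (intro y; specialize (Hle y); lra).
  split; intro Hx.
  - specialize (mono Hd Hs 0 x Hx). simpl in mono. lra.
  - specialize (mono Hd Hs x 0 Hx). simpl in mono. lra.
Qed.

Lemma exp_tangent x y : exp y * (1 + (x - y)) <= exp x.
Proof.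
  replace (exp x) with (exp y * exp (x - y)) by (rewrite <- exp_plus; f_equal; ring).
  apply Rmult_le_compat_l; [left; apply exp_pos | apply exp_ineq1_le].
Qed.

Lemma exp_convex l x y : 0 <= l <= 1 ->
  exp (l * x + (1 - l) * y) <= l * exp x + (1 - l) * exp y.
Proof.
  intros Hl. set (m := l * x + (1 - l) * y).
  assert (Hx := exp_tangent x m). assert (Hy := exp_tangent y m).
  assert (Hlx : l * (exp m * (1 + (x - m))) <= l * exp x)
    by (apply Rmult_le_compat_l; lra).
  assert (Hly : (1 - l) * (exp m * (1 + (y - m))) <= (1 - l) * exp y)
    by (apply Rmult_le_compat_l; lra).
  replace (exp m) with (l * (exp m * (1 + (x - m))) + (1 - l) * (exp m * (1 + (y - m))))
    by (unfold m; ring).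
  lra.
Qed.

Definition Dnum (nu s : R) : R := exp s - 1 - (exp (nu * s) - 1) / nu.

Lemma Dnu_ln nu t : nu <> 0 -> 0 < t -> t <> 1 -> Dnu nu t = Dnum nu (ln t) / ln t.
Proof.
  intros Hnu Ht Ht1.
  assert (Hs := ln_neq_0 t Ht1 Ht).
  unfold Dnu, logmean, Dnum, Rpower. rewrite ln_exp, ln_1, exp_ln by exact Ht.
  field. auto.
Qed.

Lemma Dnum_0 nu : Dnum nu 0 = 0.
Proof. unfold Dnum. rewrite Rmult_0_r, exp_0. unfold Rdiv. ring. Qed.

Lemma Dnum_half s : Dnum (1 / 2) s = (exp (s / 2) - 1) ^ 2.
Proof.
  unfold Dnum. replace (exp s) with (exp (s / 2) * exp (s / 2))
    by (rewrite <- exp_plus; f_equal; field).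
  replace (1 / 2 * s) with (s / 2) by field. field.
Qed.

Lemma is_derive_Dnum nu x : nu <> 0 -> is_derive (Dnum nu) x (exp x - exp (nu * x)).
Proof. intros Hnu. unfold Dnum. auto_derive; [exact I | field; exact Hnu]. Qed.

Lemma Dnum_derive_lower nu x : 0 <= nu <= 1 -> (1 - nu) * (exp x - 1) <= exp x - exp (nu * x).
Proof.
  intros Hnu. assert (H := exp_convex nu x 0 Hnu).
  rewrite Rmult_0_r, Rplus_0_r, exp_0 in H. lra.
Qed.

Lemma Dnum_derive_upper nu x : exp x - exp (nu * x) <= (1 - nu) * x * exp x.
Proof. assert (H := exp_tangent (nu * x) x). nra. Qed.

Lemma Dnum_antitone nu mu s : 0 < nu <= mu -> Dnum mu s <= Dnum nu s.
Proof.
  intros Hnm.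
  assert (Hc : exp (nu * s) - 1 <= nu / mu * (exp (mu * s) - 1)).
  { assert (H := exp_convex (1 - nu / mu) 0 (mu * s)).
    replace ((1 - nu / mu) * 0 + (1 - (1 - nu / mu)) * (mu * s)) with (nu * s) in H
      by (field; lra).
    rewrite exp_0 in H.
    assert (0 <= nu / mu <= 1).
    { split; [apply Rdiv_le_0_compat; lra|].
      apply (Rmult_le_reg_r mu); [lra|]. unfold Rdiv. rewrite Rmult_assoc, Rinv_l; lra. }
    specialize (H ltac:(lra)). lra. }
  unfold Dnum.
  assert ((exp (nu * s) - 1) / nu <= (exp (mu * s) - 1) / mu); [|lra].
  replace ((exp (mu * s) - 1) / mu) with (nu / mu * (exp (mu * s) - 1) / nu) by (field; lra).
  apply Rmult_le_compat_r; [left; apply Rinv_0_lt_compat; lra | exact Hc].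
Qed.

Lemma Dnum_weighted_monotone nu mu s : 0 < nu <= mu -> mu < 1 ->
  (1 - mu) * nu * Dnum nu s <= (1 - nu) * mu * Dnum mu s.
Proof.
  intros Hnm Hmu.
  assert (Hc : (1 - nu) * exp (mu * s) <= (1 - mu) * exp (nu * s) + (mu - nu) * exp s).
  { set (l := (1 - mu) / (1 - nu)).
    assert (Hl : 0 <= l <= 1).
    { unfold l. split; [apply Rdiv_le_0_compat; lra|].
      apply (Rmult_le_reg_r (1 - nu)); [lra|]. unfold Rdiv. rewrite Rmult_assoc, Rinv_l; lra. }
    assert (H := exp_convex l (nu * s) s Hl).
    replace (l * (nu * s) + (1 - l) * s) with (mu * s) in H by (unfold l; field; lra).
    apply (Rmult_le_compat_l (1 - nu)) in H; [|lra].
    replace ((1 - nu) * (l * exp (nu * s) + (1 - l) * exp s))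
      with ((1 - mu) * exp (nu * s) + (mu - nu) * exp s) in H by (unfold l; field; lra).
    exact H. }
  assert (E : (1 - nu) * mu * Dnum mu s - (1 - mu) * nu * Dnum nu s
              = (mu - nu) * exp s + (1 - mu) * exp (nu * s) - (1 - nu) * exp (mu * s))
    by (unfold Dnum; field; lra).
  lra.
Qed.

Lemma Dnum_bounds_sqrt nu s : 0 < nu < 1 ->
  Rmin nu (1 - nu) / nu * (exp (s / 2) - 1) ^ 2 <= Dnum nu s <=
  Rmax nu (1 - nu) / nu * (exp (s / 2) - 1) ^ 2.
Proof.
  intros Hnu. rewrite <- Dnum_half.
  destruct (Rle_lt_dec nu (1 / 2)) as [Hh | Hh].
  - rewrite Rmin_left, Rmax_right by lra.
    assert (A := Dnum_antitone nu (1 / 2) s ltac:(lra)).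
    assert (W := Dnum_weighted_monotone nu (1 / 2) s ltac:(lra) ltac:(lra)).
    replace (nu / nu) with 1 by (field; lra). split; [lra|].
    apply (Rmult_le_reg_l nu); [lra|].
    replace (nu * ((1 - nu) / nu * Dnum (1 / 2) s)) with ((1 - nu) * Dnum (1 / 2) s)
      by (field; lra). lra.
  - rewrite Rmin_right, Rmax_left by lra.
    assert (A := Dnum_antitone (1 / 2) nu s ltac:(lra)).
    assert (W := Dnum_weighted_monotone (1 / 2) nu s ltac:(lra) ltac:(lra)).
    replace (nu / nu) with 1 by (field; lra). split; [|lra].
    apply (Rmult_le_reg_l nu); [lra|].
    replace (nu * ((1 - nu) / nu * Dnum (1 / 2) s)) with ((1 - nu) * Dnum (1 / 2) s)
      by (field; lra). lra.
Qed.

Lemma Dnum_bounds_sq nu s : 0 < nu < 1 ->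
  (1 - nu) / 2 * (exp s - 1) ^ 2 / Rmax (exp s) 1 <= Dnum nu s <=
  (1 - nu) / 2 * (exp s - 1) ^ 2 / Rmin (exp s) 1.
Proof.
  intros Hnu.
  assert (Hd := fun x => is_derive_Dnum nu x ltac:(lra)).
  assert (Hc : forall x, is_derive (fun x => (1 - nu) / 2 * (exp x - 2 + exp (- x))) x
                                   ((1 - nu) / 2 * (exp x - exp (- x))))
    by (intro x; auto_derive; [exact I | field]).
  assert (Hq : forall x, is_derive (fun x => (1 - nu) / 2 * (exp x - 1) ^ 2) x
                                   ((1 - nu) * (exp x - 1) * exp x))
    by (intro x; auto_derive; [exact I | field]).
  destruct (le_of_derive_le _ _ _ _ Hc Hd) with (x := s) as [low_pos low_neg].
  { intro x. assert (H := Dnum_derive_lower nu x ltac:(lra)).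
    assert (1 + x <= exp x) by apply exp_ineq1_le.
    assert (1 + - x <= exp (- x)) by apply exp_ineq1_le.
    assert (0 <= (1 - nu) * (exp x + exp (- x) - 2)) by (apply Rmult_le_pos; lra).
    lra. }
  { rewrite Dnum_0, Ropp_0, exp_0. ring. }
  destruct (le_of_derive_le _ _ _ _ Hd Hq) with (x := s) as [up_pos up_neg].
  { intro x. assert (H := Dnum_derive_upper nu x).
    assert (1 + x <= exp x) by apply exp_ineq1_le.
    assert (0 <= (1 - nu) * exp x * (exp x - 1 - x))
      by (apply Rmult_le_pos; [apply Rmult_le_pos; [lra | left; apply exp_pos] | lra]).
    lra. }
  { rewrite Dnum_0, exp_0. ring. }
  assert (Hpos : 0 < exp s) by apply exp_pos.
  assert (E : (1 - nu) / 2 * (exp s - 1) ^ 2 / exp s = (1 - nu) / 2 * (exp s - 2 + exp (- s)))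
    by (rewrite exp_Ropp; field; lra).
  destruct (Rle_lt_dec 0 s) as [Hs | Hs].
  - assert (1 <= exp s) by (assert (1 + s <= exp s) by apply exp_ineq1_le; lra).
    rewrite Rmin_right, Rmax_left, E, Rdiv_1_r by lra.
    specialize (low_pos Hs). specialize (up_pos Hs). lra.
  - assert (exp s < 1) by (rewrite <- exp_0; apply exp_increasing; exact Hs).
    rewrite Rmin_left, Rmax_right, E, Rdiv_1_r by lra.
    specialize (low_neg ltac:(lra)). specialize (up_neg ltac:(lra)). lra.
Qed.

Lemma Dnum_bounds_log nu s : 0 < nu < 1 ->
  (1 - nu) / 2 * Rmin (exp s) 1 * s ^ 2 <= Dnum nu s <=
  (1 - nu) / 2 * Rmax (exp s) 1 * s ^ 2.
Proof.
  intros Hnu.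
  assert (Hd := fun x => is_derive_Dnum nu x ltac:(lra)).
  assert (Hq : forall x, is_derive (fun x => (1 - nu) / 2 * x ^ 2) x ((1 - nu) * x))
    by (intro x; auto_derive; [exact I | field]).
  assert (Hqe : forall x, is_derive (fun x => (1 - nu) / 2 * exp x * x ^ 2) x
                                    ((1 - nu) * (x + x ^ 2 / 2) * exp x))
    by (intro x; auto_derive; [exact I | field]).
  destruct (le_of_derive_le _ _ _ _ Hq Hd) with (x := s) as [low_pos low_neg].
  { intro x. assert (H := Dnum_derive_lower nu x ltac:(lra)).
    assert (1 + x <= exp x) by apply exp_ineq1_le. nra. }
  { rewrite Dnum_0. ring. }
  destruct (le_of_derive_le _ _ _ _ Hd Hqe) with (x := s) as [up_pos up_neg].
  { intro x. assert (H := Dnum_derive_upper nu x).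
    assert (0 <= x ^ 2 * exp x) by (apply Rmult_le_pos; [nra | left; apply exp_pos]).
    nra. }
  { rewrite Dnum_0. ring. }
  destruct (Rle_lt_dec 0 s) as [Hs | Hs].
  - assert (1 <= exp s) by (assert (1 + s <= exp s) by apply exp_ineq1_le; lra).
    rewrite Rmin_right, Rmax_left by lra. specialize (low_pos Hs). specialize (up_pos Hs). lra.
  - assert (exp s < 1) by (rewrite <- exp_0; apply exp_increasing; exact Hs).
    rewrite Rmin_left, Rmax_right by lra.
    specialize (low_neg ltac:(lra)). specialize (up_neg ltac:(lra)). lra.
Qed.

Lemma Dnum_bounds_dual nu s : 0 < nu < 1 ->
  (1 - nu) / nu * Rmin (nu / (1 - nu)) ((1 - nu) / nu) * Dnum (1 - nu) s <= Dnum nu s <=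
  (1 - nu) / nu * Rmax (nu / (1 - nu)) ((1 - nu) / nu) * Dnum (1 - nu) s.
Proof.
  intros Hnu.
  assert (Hswap : forall a b, 0 < a -> 0 < b -> a <= b -> a / b <= b / a).
  { intros a b Ha Hb Hab. apply (Rmult_le_reg_r (a * b)); [nra|].
    replace (a / b * (a * b)) with (a * a) by (field; lra).
    replace (b / a * (a * b)) with (b * b) by (field; lra). nra. }
  destruct (Rle_lt_dec nu (1 / 2)) as [Hh | Hh].
  - rewrite Rmin_left, Rmax_right by (apply Hswap; lra).
    replace ((1 - nu) / nu * (nu / (1 - nu))) with 1 by (field; lra).
    assert (A := Dnum_antitone nu (1 - nu) s ltac:(lra)).
    assert (W := Dnum_weighted_monotone nu (1 - nu) s ltac:(lra) ltac:(lra)).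
    split; [lra|].
    apply (Rmult_le_reg_l (nu * nu)); [nra|].
    replace (nu * nu * ((1 - nu) / nu * ((1 - nu) / nu) * Dnum (1 - nu) s))
      with ((1 - nu) * (1 - nu) * Dnum (1 - nu) s) by (field; lra).
    replace (1 - (1 - nu)) with nu in W by ring. lra.
  - rewrite Rmin_right, Rmax_left by (apply Hswap; lra).
    replace ((1 - nu) / nu * (nu / (1 - nu))) with 1 by (field; lra).
    assert (A := Dnum_antitone (1 - nu) nu s ltac:(lra)).
    assert (W := Dnum_weighted_monotone (1 - nu) nu s ltac:(lra) ltac:(lra)).
    split; [|lra].
    apply (Rmult_le_reg_l (nu * nu)); [nra|].
    replace (nu * nu * ((1 - nu) / nu * ((1 - nu) / nu) * Dnum (1 - nu) s))
      with ((1 - nu) * (1 - nu) * Dnum (1 - nu) s) by (field; lra).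
    replace (1 - (1 - nu)) with nu in W by ring. lra.
Qed.

Definition between_by_sign (s lo x hi : R) : Prop :=
  (0 < s -> lo <= x /\ x <= hi) /\ (s < 0 -> lo >= x /\ x >= hi).

Lemma between_by_sign_div lo x hi s :
  lo <= x <= hi -> between_by_sign s (lo / s) (x / s) (hi / s).
Proof.
  intros Hx. split; intros Hs.
  - assert (0 < / s) by (apply Rinv_0_lt_compat; exact Hs).
    unfold Rdiv. split; apply Rmult_le_compat_r; lra.
  - assert (/ s < 0) by (apply Rinv_lt_0_compat; exact Hs).
    unfold Rdiv. split; apply Rle_ge; nra.
Qed.

Section Rows.

Variables nu t : R.
Hypotheses (Hnu : 0 < nu < 1) (Ht : 0 < t) (Ht1 : t <> 1).

Lemma Dnu_bounds_sqrt :
  between_by_sign (ln t) (Rmin nu (1 - nu) / nu * ((sqrt t - 1) ^ 2 / ln t))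
    (Dnu nu t) (Rmax nu (1 - nu) / nu * ((sqrt t - 1) ^ 2 / ln t)).
Proof.
  rewrite (Dnu_ln nu t), !Rmult_div_assoc by lra.
  apply between_by_sign_div.
  rewrite <- Rpower_sqrt by exact Ht. unfold Rpower.
  replace (/ 2 * ln t) with (ln t / 2) by field.
  apply Dnum_bounds_sqrt, Hnu.
Qed.

Lemma Dnu_bounds_sq :
  between_by_sign (ln t) ((1 - nu) / 2 * ((t - 1) ^ 2 / (Rmax t 1 * ln t)))
    (Dnu nu t) ((1 - nu) / 2 * ((t - 1) ^ 2 / (Rmin t 1 * ln t))).
Proof.
  rewrite (Dnu_ln nu t) by lra.
  replace ((1 - nu) / 2 * ((t - 1) ^ 2 / (Rmax t 1 * ln t)))
    with ((1 - nu) / 2 * (t - 1) ^ 2 / Rmax t 1 / ln t)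
    by (unfold Rdiv; rewrite Rinv_mult; ring).
  replace ((1 - nu) / 2 * ((t - 1) ^ 2 / (Rmin t 1 * ln t)))
    with ((1 - nu) / 2 * (t - 1) ^ 2 / Rmin t 1 / ln t)
    by (unfold Rdiv; rewrite Rinv_mult; ring).
  apply between_by_sign_div.
  assert (H := Dnum_bounds_sq nu (ln t) Hnu). rewrite exp_ln in H by exact Ht. exact H.
Qed.

Lemma Dnu_bounds_log :
  between_by_sign (ln t) ((1 - nu) / 2 * Rmin t 1 * ln t)
    (Dnu nu t) ((1 - nu) / 2 * Rmax t 1 * ln t).
Proof.
  assert (Hs := ln_neq_0 t Ht1 Ht).
  rewrite (Dnu_ln nu t) by lra.
  replace ((1 - nu) / 2 * Rmin t 1 * ln t) with ((1 - nu) / 2 * Rmin t 1 * ln t ^ 2 / ln t)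
    by (field; exact Hs).
  replace ((1 - nu) / 2 * Rmax t 1 * ln t) with ((1 - nu) / 2 * Rmax t 1 * ln t ^ 2 / ln t)
    by (field; exact Hs).
  apply between_by_sign_div.
  assert (H := Dnum_bounds_log nu (ln t) Hnu). rewrite exp_ln in H by exact Ht. exact H.
Qed.

Lemma Dnu_bounds_dual :
  between_by_sign (ln t)
    ((1 - nu) / nu * Rmin (nu / (1 - nu)) ((1 - nu) / nu) * Dnu (1 - nu) t)
    (Dnu nu t)
    ((1 - nu) / nu * Rmax (nu / (1 - nu)) ((1 - nu) / nu) * Dnu (1 - nu) t).
Proof.
  rewrite (Dnu_ln nu t), (Dnu_ln (1 - nu) t), !Rmult_div_assoc by lra.
  apply between_by_sign_div, Dnum_bounds_dual, Hnu.
Qed.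

End Rows.

Theorem proposition2p6 (nu t : R) :
  0 < nu < 1 ->
  (1 < t ->
     (Rmin nu (1 - nu) / nu * ((sqrt t - 1) ^ 2 / ln t) <= Dnu nu t /\
      Dnu nu t <= Rmax nu (1 - nu) / nu * ((sqrt t - 1) ^ 2 / ln t)) /\
     ((1 - nu) / 2 * ((t - 1) ^ 2 / (Rmax t 1 * ln t)) <= Dnu nu t /\
      Dnu nu t <= (1 - nu) / 2 * ((t - 1) ^ 2 / (Rmin t 1 * ln t))) /\
     ((1 - nu) / 2 * Rmin t 1 * ln t <= Dnu nu t /\
      Dnu nu t <= (1 - nu) / 2 * Rmax t 1 * ln t) /\
     ((1 - nu) / nu * Rmin (nu / (1 - nu)) ((1 - nu) / nu)
        * (logmean t 1 - logmean (Rpower t (1 - nu)) 1) <= Dnu nu t /\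
      Dnu nu t <= (1 - nu) / nu * Rmax (nu / (1 - nu)) ((1 - nu) / nu)
        * (logmean t 1 - logmean (Rpower t (1 - nu)) 1))) /\
  (0 < t < 1 ->
     (Rmin nu (1 - nu) / nu * ((sqrt t - 1) ^ 2 / ln t) >= Dnu nu t /\
      Dnu nu t >= Rmax nu (1 - nu) / nu * ((sqrt t - 1) ^ 2 / ln t)) /\
     ((1 - nu) / 2 * ((t - 1) ^ 2 / (Rmax t 1 * ln t)) >= Dnu nu t /\
      Dnu nu t >= (1 - nu) / 2 * ((t - 1) ^ 2 / (Rmin t 1 * ln t))) /\
     ((1 - nu) / 2 * Rmin t 1 * ln t >= Dnu nu t /\
      Dnu nu t >= (1 - nu) / 2 * Rmax t 1 * ln t) /\
     ((1 - nu) / nu * Rmin (nu / (1 - nu)) ((1 - nu) / nu)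
        * (logmean t 1 - logmean (Rpower t (1 - nu)) 1) >= Dnu nu t /\
      Dnu nu t >= (1 - nu) / nu * Rmax (nu / (1 - nu)) ((1 - nu) / nu)
        * (logmean t 1 - logmean (Rpower t (1 - nu)) 1))).
Proof.
  intros Hnu.
  change (logmean t 1 - logmean (Rpower t (1 - nu)) 1) with (Dnu (1 - nu) t).
  split; intros Ht;
    [ assert (Hs : 0 < ln t) by (rewrite <- ln_1; apply ln_increasing; lra)
    | assert (Hs : ln t < 0) by (rewrite <- ln_1; apply ln_increasing; lra) ];
    assert (Ht0 : 0 < t) by lra; assert (Ht1 : t <> 1) by lra;
    pose proof (Dnu_bounds_sqrt nu t Hnu Ht0 Ht1);
    pose proof (Dnu_bounds_sq nu t Hnu Ht0 Ht1);
    pose proof (Dnu_bounds_log nu t Hnu Ht0 Ht1);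
    pose proof (Dnu_bounds_dual nu t Hnu Ht0 Ht1);
    unfold between_by_sign in *; tauto.
Qed.
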